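(* Let $(X,T)$ be a topological dynamical system and $d\in\mathbb{N}$. (1) For every $n\in\mathbb{N}$, ${\bf P}(X,T)={\bf P}(X,T^n)$. (2) If ${\bf P}(X,T)$ is closed, then ${\bf P}(N_d(X),\mathcal{G}_d(T))=\{((x_i)_{i=1}^d,(y_i)_{i=1}^d)\in N_d(X)\times N_d(X):(x_i,y_i)\in{\bf P}(X,T)\text{ for }i=1,\dots,d\}$.
   Context: For a system $(Z,G)$, ${\bf P}(Z,G)=\{(x,y):\inf_{g\in G}\rho(gx,gy)=0\}$ (for $(X,S)$, $G=\{S^k:k\in\mathbb{Z}\}$). $N_d(X)=\overline{\{(T^{p+q}x,\dots,T^{p+dq}x):x\in X,p,q\in\mathbb{Z}\}}$, $\mathcal{G}_d(T)=\langle T\times\cdots\times T,\ T\times T^2\times\cdots\times T^d\rangle$. *)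

From HB Require Import structures.
From mathcomp Require Import all_boot all_order all_algebra.
From mathcomp Require Import all_classical all_reals all_analysis.
Set Implicit Arguments. Unset Strict Implicit. Unset Printing Implicit Defensive.
Import Order.TTheory GRing.Theory Num.Theory.
Local Open Scope classical_set_scope.
Local Open Scope ring_scope.

Definition tds (R : realType) (X : metricType R) (T Tinv : X -> X) : Prop :=
  [/\ compact [set: X], continuous T, continuous Tinv,
      cancel T Tinv & cancel Tinv T].

Definition iterz (X : Type) (T Tinv : X -> X) (k : int) : X -> X :=
  match k with
  | Posz n => iter n T
  | Negz n => iter n.+1 Tinv
  end.

Definition proximal (R : realType) (X : metricType R) (T Tinv : X -> X)
    (x y : X) : Prop :=
  forall e : R, 0 < e -> exists k : int,
    mdist (iterz T Tinv k x) (iterz T Tinv k y) < e.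

(* Points of X^d are functions 'I_d -> X; coordinate i : 'I_d is the
   (i+1)-th coordinate of the paper.  X^d carries the max metric
   rho_d(z,w) = max_i rho(z i, w i). *)

(* N_d(X) = closure (for the max metric, i.e. the product topology) of
   {(T^{p+q}x, ..., T^{p+dq}x) : x in X, p,q in Z}. *)
Definition Nd (R : realType) (X : metricType R) (T Tinv : X -> X) (d : nat)
    (z : 'I_d -> X) : Prop :=
  forall e : R, 0 < e -> exists (x : X) (p q : int),
    forall i : 'I_d, mdist (z i) (iterz T Tinv (p + (i.+1)%:Z * q) x) < e.

(* The group G_d(T) = < T x ... x T , T x T^2 x ... x T^d > acting on X^d:
   the set of all finite words in the two generators and their inverses. *)
Definition diagT (X : Type) (d : nat) (T : X -> X) : ('I_d -> X) -> ('I_d -> X) :=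
  fun z i => T (z i).
Definition stepT (X : Type) (d : nat) (T : X -> X) : ('I_d -> X) -> ('I_d -> X) :=
  fun z i => iter i.+1 T (z i).

Inductive Gd (X : Type) (d : nat) (T Tinv : X -> X) :
    (('I_d -> X) -> ('I_d -> X)) -> Prop :=
  | Gd_id : Gd T Tinv id
  | Gd_sigma g : Gd T Tinv g -> Gd T Tinv (diagT T \o g)
  | Gd_sigmainv g : Gd T Tinv g -> Gd T Tinv (diagT Tinv \o g)
  | Gd_tau g : Gd T Tinv g -> Gd T Tinv (stepT T \o g)
  | Gd_tauinv g : Gd T Tinv g -> Gd T Tinv (stepT Tinv \o g).

Definition proximalGd (R : realType) (X : metricType R) (T Tinv : X -> X)
    (d : nat) (z w : 'I_d -> X) : Prop :=
  Nd T Tinv z /\ Nd T Tinv w /\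
  forall e : R, 0 < e -> exists g, Gd T Tinv g /\
    forall i : 'I_d, mdist (g z i) (g w i) < e.

From HB Require Import structures.
From mathcomp Require Import all_boot all_order all_algebra.
From mathcomp Require Import all_classical all_reals all_analysis.
From mathcomp Require Import ring lra.
Set Implicit Arguments. Unset Strict Implicit. Unset Printing Implicit Defensive.
Import Order.TTheory GRing.Theory Num.Theory.
Local Open Scope classical_set_scope.
Local Open Scope ring_scope.

(* (1) Every time k is followed within n steps by a multiple of n, and by
   compactness the iterates T^r, r < n, are uniformly equicontinuous, so
   closeness of T^k x and T^k y propagates to the next multiple of n.
   (2) An element of G_d(T) acts on the i-th coordinate as T^(a + i b), which
   gives the inclusion from left to right.  Conversely, when P(X,T) is closed,
   finitely many proximal pairs are simultaneously proximal: along the times k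
   at which the first pairs are close, (T^k x, T^k y) clusters at some (b, c),
   which is proximal because P(X,T) is closed and T-invariant; if T^m b and
   T^m c are close then so are T^(m+k) x and T^(m+k) y for suitable such k.
   A common time k then yields the diagonal element T^k x ... x T^k. *)

Lemma compact_nested_cluster {R : realDomainType} {Y : topologicalType}
    (B : R -> set Y) :
  compact [set: Y] -> (forall e, 0 < e -> B e !=set0) ->
  (forall e e', 0 < e -> e <= e' -> B e `<=` B e') ->
  exists p, forall e, 0 < e -> closure (B e) p.
Proof.
move=> cY B_neq0 B_mono.
pose F := filter_from (fun e : R => 0 < e) B.
have F_proper : ProperFilter F.
  apply: filter_from_proper => //; apply: filter_from_filter; first by exists 1.
  move=> e e' e0 e'0; exists (Num.min e e'); first by rewrite lt_min e0 e'0.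
  by move=> p Bp; split; apply: B_mono Bp;
    rewrite ?lt_min ?ge_min ?e0 ?e'0 ?lexx ?orbT.
have [p [_ clp]] := cY F F_proper filterT.
by exists p => e e0 N Np; apply: clp Np; exists e.
Qed.

Lemma iter_continuous {Y : topologicalType} (f : Y -> Y) n :
  continuous f -> continuous (iter n f).
Proof.
move=> cf; elim: n => [|n IH] x /=; first exact: cvg_id.
exact: continuous_comp (IH x) (cf _).
Qed.

Section metric.
Context {R : realType} {X : metricType R}.
Implicit Types (x y u v : X) (f : X -> X).

Lemma continuous_mdist_lt f x : continuous f ->
  forall e, 0 < e -> exists2 d, 0 < d &
    forall y, mdist x y < d -> mdist (f x) (f y) < e.
Proof.
move=> cf e e0.
have [d /= d0 fd] := (metricType_numDomainType.nbhs_mdistP _ _).1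
  (metricType_numDomainType.cvgr_dist_lt (cf x) e0).
by exists d => // y /fd.
Qed.

Lemma closureX_mdist_lt (A : set (X * X)) x y : closure A (x, y) ->
  forall d1 d2, 0 < d1 -> 0 < d2 ->
  exists p, A p /\ mdist x p.1 < d1 /\ mdist y p.2 < d2.
Proof.
move=> clA d1 d2 d10 d20.
have : nbhs (x, y) [set p : X * X | mdist x p.1 < d1 /\ mdist y p.2 < d2].
  exists ([set u | mdist x u < d1], [set v | mdist y v < d2]); last by [].
  by split; apply/metricType_numDomainType.nbhs_mdistP; [exists d1|exists d2].
by move=> /clA [p [Ap close]]; exists p.
Qed.

Lemma mdist_lt_split3 x u v y e :
  mdist x u < e / 3 -> mdist u v < e / 3 -> mdist v y < e / 3 -> mdist x y < e.
Proof.
have := metric_triangle x u y; have := metric_triangle u v y; lra.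
Qed.

(* A cluster point of pairs that are d-close but have e-far images, d -> 0,
   lies on the diagonal, where continuity of f is violated. *)
Lemma compact_uniform_continuity f : compact [set: X] -> continuous f ->
  forall e, 0 < e -> exists2 d, 0 < d &
    forall u v, mdist u v < d -> mdist (f u) (f v) < e.
Proof.
move=> cX cf e e0; apply: contrapT => not_unif.
pose B d := [set p : X * X | mdist p.1 p.2 < d /\ e <= mdist (f p.1) (f p.2)].
have B_neq0 d : 0 < d -> B d !=set0.
  move=> d0; apply: contrapT => B0; apply: not_unif; exists d => // u v uv.
  by rewrite ltNge; apply/negP => fuv; apply: B0; exists (u, v).
have B_mono d d' : 0 < d -> d <= d' -> B d `<=` B d'.
  by move=> _ dd' p [pd fp]; split => //; apply: lt_le_trans dd'.
have cXX : compact [set: X * X] by rewrite -setXTT; apply: compact_setX.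
have [[a b] clab] := compact_nested_cluster cXX B_neq0 B_mono.
have ab : a = b.
  apply/eqP; apply: contraT; rewrite -mdist_gt0 => ab0.
  have ab3 : 0 < mdist a b / 3 by rewrite divr_gt0.
  have [[u v] [[/= uv _] [au bv]]] := closureX_mdist_lt (clab _ ab3) ab3 ab3.
  rewrite metric_sym in bv.
  by have := mdist_lt_split3 au uv bv; rewrite ltxx.
subst b.
have e2 : 0 < e / 2 by rewrite divr_gt0.
have [d d0 fa] := continuous_mdist_lt a cf e2.
have [[u v] [[/= _ fuv] [au av]]] := closureX_mdist_lt (clab _ ltr01) d0 d0.
have := fa _ av; have := fa _ au; rewrite metric_sym.
have := metric_triangle (f u) (f a) (f v); lra.
Qed.

Lemma uniform_continuity_iter f : compact [set: X] -> continuous f ->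
  forall e N, 0 < e -> exists2 d, 0 < d &
    forall r u v, (r < N)%N -> mdist u v < d -> mdist (iter r f u) (iter r f v) < e.
Proof.
move=> cX cf e N e0; elim: N => [|N [d1 d10 IH]]; first by exists 1.
have [d2 d20 fN] := compact_uniform_continuity cX (iter_continuous (n := N) cf) e0.
exists (Num.min d1 d2); first by rewrite lt_min d10 d20.
move=> r u v; rewrite ltnS leq_eqVlt lt_min => /orP[/eqP-> | rN] /andP[uv1 uv2].
  exact: fN.
exact: IH.
Qed.

End metric.

Lemma iterz_continuous {Y : topologicalType} (T Tinv : Y -> Y) k :
  continuous T -> continuous Tinv -> continuous (iterz T Tinv k).
Proof. by move=> cT cTinv; case: k => n; apply: iter_continuous. Qed.

Section iterz.
Context {X : Type} (T Tinv : X -> X).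
Local Notation iz := (iterz T Tinv).

Lemma iterzN (n : nat) x : iz (- n%:Z) x = iter n Tinv x.
Proof. by case: n. Qed.

Lemma iterz_iter n (m : int) x :
  iterz (iter n T) (iter n Tinv) m x = iz (m * n%:Z) x.
Proof.
case: m => m; first by rewrite -PoszM /= iterM.
by rewrite NegzE mulNr -PoszM iterzN iterM.
Qed.

Hypotheses (TK : cancel T Tinv) (TinvK : cancel Tinv T).

Lemma iterzD1 k x : iz (k + 1) x = T (iz k x).
Proof. by case: k => [n|[|n]] /=; rewrite ?addn1 ?subn1 /= ?TinvK. Qed.

Lemma iterzB1 k x : iz (k - 1) x = Tinv (iz k x).
Proof. by rewrite -{2}(subrK 1 k) iterzD1 TK. Qed.

Lemma iterzD a b x : iz (a + b) x = iz a (iz b x).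
Proof.
case: a => n; elim: n => [|n IH].
- by rewrite add0r.
- by rewrite -addn1 PoszD addrAC !iterzD1 IH.
- by rewrite /= -iterzB1 addrC.
- by rewrite NegzE -addn1 PoszD opprD addrAC !iterzB1 -NegzE IH.
Qed.

End iterz.

Section Gd.
Context {X : Type} (d : nat) (T Tinv : X -> X).
Local Notation iz := (iterz T Tinv).

Lemma Gd_diag_iterz k : exists2 g, Gd T Tinv g &
  forall (z : 'I_d -> X) i, g z i = iz k (z i).
Proof.
have diag_iter f
    (Gd_diag : forall g : ('I_d -> X) -> 'I_d -> X,
       Gd T Tinv g -> Gd T Tinv (diagT f \o g)) n :
    exists2 g, Gd T Tinv g & forall (z : 'I_d -> X) i, g z i = iter n f (z i).
  elim: n => [|n [g Gg gE]]; first by exists id => //; exact: Gd_id.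
  by exists (diagT f \o g) => [|z i]; [exact: Gd_diag | rewrite /= /diagT gE].
by case: k => n; [exact: diag_iter (@Gd_sigma _ _ _ _) n
                 | exact: diag_iter (@Gd_sigmainv _ _ _ _) n.+1].
Qed.

Hypotheses (TK : cancel T Tinv) (TinvK : cancel Tinv T).

Lemma Gd_iterz g : Gd T Tinv g -> exists a b : int,
  forall (z : 'I_d -> X) i, g z i = iz (a + i.+1%:Z * b) (z i).
Proof.
elim=> [|g' _ [a [b gE]]|g' _ [a [b gE]]|g' _ [a [b gE]]|g' _ [a [b gE]]].
- by exists 0, 0 => z i; rewrite mulr0 addr0.
- exists (a + 1), b => z i.
  by rewrite /= /diagT gE -iterzD1 // addrAC.
- exists (a - 1), b => z i.
  by rewrite /= /diagT gE -iterzB1 // addrAC.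
- exists a, (b + 1) => z i.
  rewrite /= /stepT gE -[iter _ T _]/(iz i.+1%:Z _) -iterzD //.
  by congr iz; ring.
- exists a, (b - 1) => z i.
  rewrite /= /stepT gE -(iterzN T) -iterzD //.
  by congr iz; ring.
Qed.

End Gd.

Section proximal.
Context {R : realType} {X : metricType R} (T Tinv : X -> X).
Hypotheses (TK : cancel T Tinv) (TinvK : cancel Tinv T).
Hypotheses (cX : compact [set: X]) (cT : continuous T) (cTinv : continuous Tinv).
Local Notation iz := (iterz T Tinv).
Local Notation prox := (proximal T Tinv).

Lemma proximal_iterz k x y : prox x y -> prox (iz k x) (iz k y).
Proof.
move=> pxy e e0; have [m mxy] := pxy e e0.
by exists (m - k); rewrite -!iterzD // subrK.
Qed.

Lemma proximal_iter n x y :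
  (0 < n)%N -> prox x y <-> proximal (iter n T) (iter n Tinv) x y.
Proof.
move=> n0; split=> [pxy e e0|pnxy e e0]; last first.
  by have [m mxy] := pnxy e e0; exists (m * n%:Z); rewrite -!iterz_iter.
have [d d0 iter_close] := uniform_continuity_iter cX cT n e0.
have [k kxy] := pxy d d0.
have nz : n%:Z != 0 by rewrite eqz_nat -lt0n.
pose r := `|((- k) %% n)%Z|%N.
have rE : r%:Z = ((- k) %% n)%Z by rewrite gez0_abs // modz_ge0.
have rn : (r < n)%N by rewrite -ltz_nat rE ltz_pmod.
exists (- ((- k) %/ n)%Z); rewrite !iterz_iter.
have -> : - ((- k) %/ n)%Z * n = r%:Z + k.
  rewrite rE; have := divz_eq (- k) n.
  set q := ((- k) %/ n)%Z; set m := ((- k) %% n)%Z => kE.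
  by rewrite -[k]opprK kE; ring.
by rewrite !iterzD //; exact: iter_close rn kxy.
Qed.

Hypothesis P_closed : closed [set p : X * X | prox p.1 p.2].

Lemma proximal_cons_close x y (s : seq (X * X)) : prox x y ->
  (forall e, 0 < e -> exists k, {in s, forall p, mdist (iz k p.1) (iz k p.2) < e}) ->
  forall e, 0 < e ->
    exists k, {in (x, y) :: s, forall p, mdist (iz k p.1) (iz k p.2) < e}.
Proof.
move=> pxy s_close e e0.
pose B eta := (fun k => (iz k x, iz k y)) @`
  [set k | {in s, forall p, mdist (iz k p.1) (iz k p.2) < eta}].
have B_neq0 eta : 0 < eta -> B eta !=set0.
  by move=> /s_close [k ks]; exists (iz k x, iz k y), k.
have B_mono eta eta' : 0 < eta -> eta <= eta' -> B eta `<=` B eta'.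
  move=> _ le_eta _ [k ks <-]; exists k => // p ps.
  exact: lt_le_trans (ks p ps) le_eta.
have cXX : compact [set: X * X] by rewrite -setXTT; apply: compact_setX.
have [[b c] clbc] := compact_nested_cluster cXX B_neq0 B_mono.
have pbc : prox b c.
  have : closure [set p : X * X | prox p.1 p.2] (b, c).
    by apply: closureS (clbc 1 ltr01) => _ [k _ <-]; exact: proximal_iterz.
  by rewrite -(closure_id _).1.
have e3 : 0 < e / 3 by rewrite divr_gt0.
have [m mbc] := pbc _ e3.
have izm_cont := iterz_continuous (k := m) cT cTinv.
have [db db0 near_b] := continuous_mdist_lt b izm_cont e3.
have [dc dc0 near_c] := continuous_mdist_lt c izm_cont e3.
have [du du0 unif_m] := compact_uniform_continuity cX izm_cont e0.
have [_ [[k ks <-] [bk ck]]] := closureX_mdist_lt (clbc _ du0) db0 dc0.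
exists (m + k) => p; rewrite in_cons => /orP[/eqP-> | ps]; rewrite !iterzD //.
  apply: mdist_lt_split3 mbc (near_c _ ck).
  by rewrite metric_sym; exact: near_b.
exact: unif_m (ks p ps).
Qed.

Lemma proximal_seq_close (s : seq (X * X)) : {in s, forall p, prox p.1 p.2} ->
  forall e, 0 < e -> exists k, {in s, forall p, mdist (iz k p.1) (iz k p.2) < e}.
Proof.
elim: s => [_ e _|[x y] s IH s_prox]; first by exists 0.
apply: proximal_cons_close; first by apply: (s_prox (x, y)); rewrite mem_head.
by apply: IH => p ps; apply: s_prox; rewrite in_cons ps orbT.
Qed.

End proximal.

Theorem lemma4p1 (R : realType) (X : metricType R) (T Tinv : X -> X)
    (d : nat) :
  tds T Tinv ->
  (forall n : nat, (0 < n)%N ->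
     forall x y : X,
       proximal T Tinv x y <-> proximal (iter n T) (iter n Tinv) x y) /\
  (closed [set p : X * X | proximal T Tinv p.1 p.2] ->
     forall z w : 'I_d -> X,
       proximalGd T Tinv z w <->
       [/\ Nd T Tinv z, Nd T Tinv w &
           forall i : 'I_d, proximal T Tinv (z i) (w i)]).
Proof.
move=> [cX cT cTinv TK TinvK]; split=> [n n0 x y|P_closed z w].
  exact: proximal_iter.
split=> [[Nz [Nw zw_close]]|[Nz Nw zw_prox]].
  split=> // i e e0; have [g [Gg gzw]] := zw_close e e0.
  have [a [b gE]] := Gd_iterz TK TinvK Gg.
  by exists (a + i.+1%:Z * b); rewrite -!gE.
do 2!split=> //; move=> e e0.
have [|k kzw] := proximal_seq_close TK TinvK cX cT cTinv P_closed
  (s := [seq (z i, w i) | i <- enum 'I_d]) _ e0.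
  by move=> _ /mapP[i _ ->]; exact: zw_prox.
have [g Gg gE] := Gd_diag_iterz d T Tinv k.
exists g; split=> // i; rewrite !gE.
by apply: (kzw (z i, w i)); rewrite map_f ?mem_enum.
Qed.
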